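(* The map $(\mathfrak F,\mathfrak G)\mapsto\mathrm{St}_{\mathfrak F}\cap\mathrm{St}_{\mathfrak G}$ from the set of taut couples of generalized flags in $V$ and $V_*$ to the set of subalgebras of $\mathfrak{gl}(V,V_* )$ is injective.
   Context: $V,V_*$: countable-dimensional complex spaces with nondegenerate pairing; $\mathfrak{gl}(V,V_* )=V\otimes V_*$ acting on $V$ by $(v\otimes w)u=\langle u,w\rangle v$ and on $V_*$ by $(v\otimes w)y=-\langle v,y\rangle w$. Orthogonal complement $F^\perp$; closed: $F=F^{\perp\perp}$; $\overline F=F^{\perp\perp}$. Generalized flag: chain of subspaces, every member in an immediate predecessor–successor pair $F'\subsetneq F''$ (no member strictly between), every nonzero vector in $F''\setminus F'$ for some pair. Semiclosed: $\overline{F'}\in\{F',F''\}$ for every pair. $\mathrm{St}$ = stabilizer in $\mathfrak{gl}(V,V_* )$. Taut couple: semiclosed generalized flags $\mathfrak F$ in $V$, $\mathfrak G$ in $V_*$ with $\mathfrak F^\perp=\{F^\perp\}$ stable under $\mathrm{St}_{\mathfrak G}$ and $\mathfrak G^\perp$ stable under $\mathrm{St}_{\mathfrak F}$. *)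

From HB Require Import structures.
From mathcomp Require Import all_boot all_order all_algebra.
Set Implicit Arguments. Unset Strict Implicit. Unset Printing Implicit Defensive.
Import GRing.Theory.
Local Open Scope ring_scope.

Definition incl {X : Type} (A B : X -> Prop) : Prop := forall x, A x -> B x.
Definition sincl {X : Type} (A B : X -> Prop) : Prop := incl A B /\ ~ incl B A.

Definition subspace (K : pzRingType) (X : lmodType K) (A : X -> Prop) : Prop :=
  A 0 /\ (forall x y, A x -> A y -> A (x + y)) /\ (forall (a : K) x, A x -> A (a *: x)).

Definition countable_dim (K : pzRingType) (X : lmodType K) : Prop :=
  exists e : nat -> X, forall x : X,
    exists s : seq (K * nat), x = \sum_(c <- s) c.1 *: e c.2.

Definition chain {X : Type} (fam : (X -> Prop) -> Prop) : Prop :=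
  forall A B, fam A -> fam B -> incl A B \/ incl B A.

Definition imm_pair {X : Type} (fam : (X -> Prop) -> Prop) (A B : X -> Prop) : Prop :=
  fam A /\ fam B /\ sincl A B /\ ~ (exists C, fam C /\ sincl A C /\ sincl C B).

Definition gen_flag (K : pzRingType) (X : lmodType K) (fam : (X -> Prop) -> Prop) : Prop :=
  [/\ (forall A, fam A -> subspace A),
      chain fam,
      (forall A, fam A -> exists A' A'', imm_pair fam A' A'' /\ (A = A' \/ A = A''))
    & (forall x : X, x <> 0 -> exists A' A'', imm_pair fam A' A'' /\ A'' x /\ ~ A' x)].

Definition semiclosed {X : Type} (cl : (X -> Prop) -> (X -> Prop))
  (fam : (X -> Prop) -> Prop) : Prop :=
  forall A' A'', imm_pair fam A' A'' -> cl A' = A' \/ cl A' = A''.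

Section Pairing.
Variables (K : pzRingType) (V W : lmodType K) (p : V -> W -> K).

Definition perpV (A : V -> Prop) : W -> Prop := fun y => forall u, A u -> p u y = 0.
Definition perpW (B : W -> Prop) : V -> Prop := fun u => forall y, B y -> p u y = 0.
Definition closV (A : V -> Prop) : V -> Prop := perpW (perpV A).
Definition closW (B : W -> Prop) : W -> Prop := perpV (perpW B).

(* An element of gl(V,V_* ) = V ⊗ V_* is given by a representative
   s = [:: (v_1,w_1); ...] standing for sum_i v_i ⊗ w_i. *)
Definition actV (s : seq (V * W)) (u : V) : V := \sum_(x <- s) p u x.2 *: x.1.
Definition actW (s : seq (V * W)) (y : W) : W := - \sum_(x <- s) p x.1 y *: x.2.

Definition stab {X : Type} (act : X -> X) (fam : (X -> Prop) -> Prop) : Prop :=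
  forall A, fam A -> forall x, A x -> A (act x).

Definition StV (fam : (V -> Prop) -> Prop) (s : seq (V * W)) : Prop := stab (actV s) fam.
Definition StW (fam : (W -> Prop) -> Prop) (s : seq (V * W)) : Prop := stab (actW s) fam.

Definition perp_famV (fam : (V -> Prop) -> Prop) : (W -> Prop) -> Prop :=
  fun B => exists A, fam A /\ B = perpV A.
Definition perp_famW (fam : (W -> Prop) -> Prop) : (V -> Prop) -> Prop :=
  fun A => exists B, fam B /\ A = perpW B.

Definition taut_couple (F : (V -> Prop) -> Prop) (G : (W -> Prop) -> Prop) : Prop :=
  gen_flag F /\ semiclosed closV F /\ gen_flag G /\ semiclosed closW G /\
  (forall s, StW G s -> StW (perp_famV F) s) /\
  (forall s, StV F s -> StV (perp_famW G) s).

End Pairing.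

From HB Require Import structures.
From mathcomp Require Import all_boot all_order all_algebra.
From Stdlib Require Import Classical FunctionalExtensionality PropExtensionality.
Set Implicit Arguments. Unset Strict Implicit. Unset Printing Implicit Defensive.
Import GRing.Theory.
Local Open Scope ring_scope.

(* For a generalized flag F and v <> 0, let below F v be
      the union of the members of F not containing v, and
      upto F v = {u | below F u ⊆ below F v}.  These form the immediate pair
      of F separating v, and every member of F is of one of these two forms,
      so F is determined by the map v |-> below F v.
   2. Closures.  If F is semiclosed, u ∈ below F v iff u = 0 or
      (u ∈ cl (below F v) and v ∉ cl (below F u)); so F is determined by the
      closures cl (below F v).
   3. Rank-one stabilizers.  v ⊗ w ∈ St_F iff w ⊥ below F v, and for a taut
      couple cl (below F v) is the annihilator of {w | v ⊗ w ∈ St_F ∩ St_G}.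
   Hence two taut couples with the same joint stabilizer have the same flag
   in V; the statement for the flags in V_* is the same one for the
   transposed pairing. *)

Lemma pred_ext (T : Type) (A B : T -> Prop) : (forall x, A x <-> B x) -> A = B.
Proof.
by move=> eAB; apply: functional_extensionality => x; apply: propositional_extensionality.
Qed.

Section Subspaces.
Variables (K : fieldType) (X : lmodType K).

Lemma subspace0 (A : X -> Prop) : subspace A -> A 0.
Proof. by case. Qed.

Lemma subspaceZ (A : X -> Prop) a x : subspace A -> A x -> A (a *: x).
Proof. by case=> _ [_ closedZ] /closedZ. Qed.

Lemma subspaceZ_inv (A : X -> Prop) c x : subspace A -> c != 0 -> A (c *: x) -> A x.
Proof.
by move=> sA c0 /(subspaceZ c^-1 sA); rewrite scalerA mulVf // scale1r.
Qed.

(* Needed because gl(V, V_* ) acts on V_* with a sign. *)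
Lemma subspaceN (A : X -> Prop) x : subspace A -> A (- x) <-> A x.
Proof.
move=> sA; split=> /(subspaceZ (-1) sA); rewrite scaleN1r //.
by rewrite opprK.
Qed.

Lemma scale_stable (A : X -> Prop) (f : X -> K) v : subspace A ->
  (forall x, A x -> A (f x *: v)) <-> A v \/ (forall x, A x -> f x = 0).
Proof.
move=> sA; split=> [stA | [Av | f0] x Ax].
- case: (classic (A v)) => Av; [by left | right] => x Ax.
  apply: NNPP => /eqP fx0; apply: Av.
  exact: (subspaceZ_inv sA fx0 (stA x Ax)).
- exact: subspaceZ.
- by rewrite f0 // scale0r; apply: subspace0.
Qed.

Lemma functional_scale (f : X -> K) :
  (forall a u v, f (a *: u + v) = a * f u + f v) -> forall a u, f (a *: u) = a * f u.
Proof.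
move=> fl a u; have f0 : f 0 = 0.
  have := fl 1 0 0; rewrite scaler0 addr0 mul1r => f0_double.
  by apply: (@addrI _ (f 0)); rewrite addr0 -f0_double.
by rewrite -[a *: u]addr0 fl f0 addr0.
Qed.

End Subspaces.

Section FlagCoordinates.
Variables (K : fieldType) (X : lmodType K) (F : (X -> Prop) -> Prop).

Definition below (v : X) : X -> Prop := fun x => exists A, F A /\ ~ A v /\ A x.
Definition upto (v : X) : X -> Prop := fun u => incl (below u) (below v).

Lemma below_max A v : F A -> ~ A v -> incl A (below v).
Proof. by move=> FA nAv x Ax; exists A. Qed.

Lemma below_self v : ~ below v v.
Proof. by case=> A [_ []]. Qed.

Lemma upto_self v : upto v v.
Proof. by []. Qed.

Lemma upto_min A v : F A -> A v -> incl (upto v) A.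
Proof.
move=> FA Av u below_uv; apply: NNPP => nAu.
by apply: (@below_self v); apply: below_uv; exists A.
Qed.

Hypothesis HF : gen_flag F.

Lemma flag_subspace A : F A -> subspace A.
Proof. by case: HF => sub _ _ _; apply: sub. Qed.

Lemma below0 x : ~ below 0 x.
Proof. by case=> A [FA [nA0 _]]; apply: nA0; apply: subspace0; apply: flag_subspace. Qed.

Lemma flag_gap P P' A : imm_pair F P P' -> F A -> ~ incl P' A -> incl A P.
Proof.
case: HF => _ ch _ _ [FP [FP' [sPP' no_between]]] FA nP'A.
have sAP' : incl A P' by case: (ch A P' FA FP').
case: (ch A P FA FP) => // sPA; apply: NNPP => nAP; apply: no_between.
by exists A.
Qed.

Lemma below_upto_of_pair P P' v : imm_pair F P P' -> P' v -> ~ P v ->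
  below v = P /\ upto v = P'.
Proof.
move=> ipP P'v nPv; have [FP [FP' [[sPP' nP'P] _]]] := ipP.
have belowP : below v = P.
  apply: pred_ext => x; split; last by exists P.
  case=> A [FA [nAv Ax]]; apply: (flag_gap ipP FA _ Ax).
  by move=> sP'A; apply: nAv; apply: sP'A.
split=> //; apply: pred_ext => u; rewrite /upto belowP; split=> [sP | P'u].
- apply: NNPP => nP'u; apply: nP'P => x P'x.
  by apply: sP; exists P'.
- move=> x [A [FA [nAu Ax]]]; apply: (flag_gap ipP FA _ Ax).
  by move=> sP'A; apply: nAu; apply: sP'A.
Qed.

Lemma below_upto_pair v : v <> 0 -> imm_pair F (below v) (upto v).
Proof.
case: HF => _ _ _ cover /cover [P [P' [ipP [P'v nPv]]]].
by have [-> ->] := below_upto_of_pair ipP P'v nPv.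
Qed.

Lemma below_in_flag v : v <> 0 -> F (below v).
Proof. by case/below_upto_pair. Qed.

Lemma flag_members A : F A <-> exists2 v, v <> 0 & (A = below v \/ A = upto v).
Proof.
split=> [FA | [v v0 [->|->]]]; last 2 first.
- exact: below_in_flag.
- by have [_ []] := below_upto_pair v0.
case: HF => _ _ pairs _; have [P [P' [ipP eA]]] := pairs A FA.
have [FP [_ [[_ nP'P] _]]] := ipP.
have [x P'x nPx] : exists2 x, P' x & ~ P x.
  by apply: NNPP => nex; apply: nP'P => x P'x; apply: NNPP => nPx; apply: nex; exists x.
have x0 : x <> 0 by move=> ex0; apply: nPx; rewrite ex0; apply: subspace0; apply: flag_subspace.
have [eP eP'] := below_upto_of_pair ipP P'x nPx.
by exists x => //; rewrite eP eP'.
Qed.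

End FlagCoordinates.

Lemma flag_eq_of_below (K : fieldType) (X : lmodType K) (F1 F2 : (X -> Prop) -> Prop) :
  gen_flag F1 -> gen_flag F2 -> below F1 = below F2 -> F1 = F2.
Proof.
move=> HF1 HF2 ebelow; have eupto : upto F1 = upto F2 by rewrite /upto ebelow.
by apply: pred_ext => A; rewrite (flag_members HF1) (flag_members HF2) ebelow eupto.
Qed.

Section Closure.
Variables (K : fieldType) (X Y : lmodType K) (q : X -> Y -> K).

Lemma closV_incl (A : X -> Prop) : incl A (closV q A).
Proof. by move=> x Ax y Ay; apply: Ay. Qed.

Lemma closV_mono (A B : X -> Prop) : incl A B -> incl (closV q A) (closV q B).
Proof. by move=> sAB x clAx y By; apply: clAx => z Az; apply: By; apply: sAB. Qed.

Variable F : (X -> Prop) -> Prop.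
Hypotheses (HF : gen_flag F) (scF : semiclosed (closV q) F).

Lemma closure_below_cases v : v <> 0 ->
  closV q (below F v) = below F v \/ closV q (below F v) = upto F v.
Proof. by move=> v0; apply: scF; apply: below_upto_pair. Qed.

Lemma closure_below_upto v : v <> 0 -> incl (closV q (below F v)) (upto F v).
Proof.
move=> v0; have [_ [_ [[sub_below_upto _] _]]] := below_upto_pair HF v0.
by case: (closure_below_cases v0) => ->.
Qed.

Lemma below_by_closure v u : v <> 0 ->
  below F v u <-> u = 0 \/ (closV q (below F v) u /\ ~ closV q (below F u) v).
Proof.
move=> v0; split=> [below_vu | [-> | [cl_vu ncl_uv]]].
- case: (classic (u = 0)) => u0; [by left | right].
  split; first exact: closV_incl.
  move=> /(closure_below_upto u0) upto_uv; case: below_vu => A [FA [nAv Au]].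
  by apply: nAv; apply: (upto_min FA Au).
- by apply: subspace0; apply: (flag_subspace HF); apply: below_in_flag.
- apply: NNPP => nbelow_vu.
  have sub_vu := below_max (below_in_flag HF v0) nbelow_vu.
  have ncl_vv : ~ closV q (below F v) v.
    by move=> cl_vv; apply: ncl_uv; apply: (closV_mono sub_vu).
  case: (closure_below_cases v0) => ecl; rewrite ecl in cl_vu ncl_vv.
  + exact: nbelow_vu cl_vu.
  + by apply: ncl_vv; apply: upto_self.
Qed.

End Closure.

Lemma flag_eq_of_closures (K : fieldType) (X Y : lmodType K) (q : X -> Y -> K)
  (F1 F2 : (X -> Prop) -> Prop) :
  gen_flag F1 -> gen_flag F2 -> semiclosed (closV q) F1 -> semiclosed (closV q) F2 ->
  (forall v u, v <> 0 -> closV q (below F1 v) u <-> closV q (below F2 v) u) ->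
  F1 = F2.
Proof.
move=> HF1 HF2 sc1 sc2 ecl; apply: flag_eq_of_below => //.
apply: functional_extensionality => v; apply: pred_ext => u.
case: (classic (v = 0)) => [-> | v0].
  by split=> /below0.
rewrite (below_by_closure HF1 sc1 u v0) (below_by_closure HF2 sc2 u v0).
case: (classic (u = 0)) => u0; first by split=> _; left.
by rewrite (ecl v u v0) (ecl u v u0).
Qed.

(* The pairing with its arguments swapped; the statements about G are those
   about F for the transposed pairing. *)
Definition transp (X Y T : Type) (q : X -> Y -> T) : Y -> X -> T := fun y x => q x y.

Section RankOne.
Variables (K : fieldType) (X Y : lmodType K) (q : X -> Y -> K).

(* The rank-one operator v ⊗ w : x |-> q x w *: v stabilizes every member of F. *)
Definition rk1_stab (F : (X -> Prop) -> Prop) (v : X) (w : Y) : Prop :=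
  forall A, F A -> A v \/ perpV q A w.

(* Rank-one form of one half of tautness: every v ⊗ w in St_F stabilizes the
   annihilators of the members of G. *)
Definition rk1_taut (F : (X -> Prop) -> Prop) (G : (Y -> Prop) -> Prop) : Prop :=
  forall v w, rk1_stab F v w -> forall B, G B -> forall x, perpW q B x -> perpW q B (q x w *: v).

Lemma rk1_stab_below F v w : rk1_stab F v w <-> perpV q (below F v) w.
Proof.
split=> [stab x [A [FA [nAv Ax]]] | perp_w A FA].
- by case: (stab A FA) => // /(_ x Ax).
- case: (classic (A v)) => Av; [by left | right] => x Ax.
  by apply: perp_w; exists A.
Qed.

Hypothesis qZl : forall a u y, q (a *: u) y = a * q u y.

Lemma taut_closure F G v w B : rk1_taut F G -> rk1_stab F v w -> G B ->
  ~ perpW q B v -> closV (transp q) B w.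
Proof.
move=> taut stab GB nperp_v x perp_x.
have [y By qvy] : exists2 y, B y & q v y <> 0.
  by apply: NNPP => nex; apply: nperp_v => y By; apply: NNPP => qvy; apply: nex; exists y.
have := taut v w stab B GB x perp_x y By.
by rewrite qZl => /eqP; rewrite mulf_eq0 => /orP [/eqP | /eqP].
Qed.

End RankOne.

(* v ⊗ w lies in St_F ∩ St_G (on Y it acts through the transposed pairing). *)
Definition rk1_joint (K : fieldType) (X Y : lmodType K) (q : X -> Y -> K)
  (F : (X -> Prop) -> Prop) (G : (Y -> Prop) -> Prop) (v : X) (w : Y) : Prop :=
  rk1_stab q F v w /\ rk1_stab (transp q) G w v.

Section ClosureFromRankOne.
Variables (K : fieldType) (X Y : lmodType K) (q : X -> Y -> K).
Hypotheses (qZl : forall a u y, q (a *: u) y = a * q u y)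
           (qZr : forall a u y, q u (a *: y) = a * q u y).
Variables (F : (X -> Prop) -> Prop) (G : (Y -> Prop) -> Prop).
Hypotheses (HF : gen_flag F) (HG : gen_flag G) (scG : semiclosed (closV (transp q)) G)
           (tautF : rk1_taut q F G) (tautG : rk1_taut (transp q) G F).

Lemma joint_of_not_closure v w0 y : v <> 0 -> y <> 0 ->
  perpV q (below F v) w0 -> ~ closV (transp q) (below G y) w0 -> rk1_joint q F G v y.
Proof.
move=> v0 y0 perp_w0 ncl.
have stab_w0 : rk1_stab q F v w0 by apply/rk1_stab_below.
have perp_v : perpW q (below G y) v.
  apply: NNPP => nperp_v; apply: ncl.
  exact: (taut_closure qZl tautF stab_w0 (below_in_flag HG y0) nperp_v).
split; last by apply/rk1_stab_below.
apply/rk1_stab_below; apply: NNPP => nperp_y; apply: ncl => z perp_z.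
have stab_z : rk1_stab (transp q) G y z by apply/rk1_stab_below.
have qZl' : forall a w x, transp q (a *: w) x = a * transp q w x.
  by move=> a w x; apply: qZr.
exact: (taut_closure qZl' tautG stab_z (below_in_flag HF v0) nperp_y perp_w0).
Qed.

(* For w0 ⊥ below F v we have v ⊗ w0 ∈ St_F.  If v ⊗ w0 ∉ St_G, then v is not
   orthogonal to B = below G w0, so by tautness w0 annihilates B^⊥; and u ∈ B^⊥
   because each nonzero y ∈ B satisfies w0 ∉ upto G y ⊇ cl (below G y), which
   puts v ⊗ y in the joint stabilizer. *)
Lemma closure_below_joint v u : v <> 0 ->
  closV q (below F v) u <-> forall w, rk1_joint q F G v w -> q u w = 0.
Proof.
move=> v0; split=> [cl_u w [stab_w _] | joint_u w0 perp_w0].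
  by apply: cl_u; apply/rk1_stab_below.
have stab_w0 : rk1_stab q F v w0 by apply/rk1_stab_below.
case: (classic (rk1_stab (transp q) G w0 v)) => [stabG | nstabG].
  exact: joint_u.
have nperp_v : ~ perpW q (below G w0) v.
  by move=> perp_v; apply: nstabG; apply/rk1_stab_below.
have w00 : w0 <> 0.
  by move=> ew0; apply: nperp_v; rewrite ew0 => y /below0.
apply: (taut_closure qZl tautF stab_w0 (below_in_flag HG w00) nperp_v) => y below_y.
case: (classic (y = 0)) => [-> | y0].
  by rewrite /transp -(scale0r (0 : Y)) qZr mul0r.
apply: joint_u; apply: (joint_of_not_closure v0 y0 perp_w0).
move=> /(closure_below_upto HG scG y0) upto_w0.
exact: (@below_self _ _ G y) (upto_w0 y below_y).
Qed.

End ClosureFromRankOne.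

(* The rank-one content of tautness seen from one side: F is a semiclosed
   generalized flag and rank-one elements of St_F stabilize G^⊥. *)
Definition half_couple (K : fieldType) (X Y : lmodType K) (q : X -> Y -> K)
  (F : (X -> Prop) -> Prop) (G : (Y -> Prop) -> Prop) : Prop :=
  [/\ gen_flag F, semiclosed (closV q) F & rk1_taut q F G].

Definition rk1_taut_couple (K : fieldType) (X Y : lmodType K) (q : X -> Y -> K)
  (F : (X -> Prop) -> Prop) (G : (Y -> Prop) -> Prop) : Prop :=
  half_couple q F G /\ half_couple (transp q) G F.

Lemma rk1_taut_couple_transp (K : fieldType) (X Y : lmodType K) (q : X -> Y -> K) F G :
  rk1_taut_couple q F G -> rk1_taut_couple (transp q) G F.
Proof. by case. Qed.

Lemma rk1_joint_transp (K : fieldType) (X Y : lmodType K) (q : X -> Y -> K) F G v w :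
  rk1_joint (transp q) G F w v <-> rk1_joint q F G v w.
Proof. by split; case. Qed.

Lemma flag_determined (K : fieldType) (X Y : lmodType K) (q : X -> Y -> K)
  (qZl : forall a u y, q (a *: u) y = a * q u y)
  (qZr : forall a u y, q u (a *: y) = a * q u y) F1 G1 F2 G2 :
  rk1_taut_couple q F1 G1 -> rk1_taut_couple q F2 G2 ->
  (forall v w, rk1_joint q F1 G1 v w <-> rk1_joint q F2 G2 v w) -> F1 = F2.
Proof.
case=> [[HF1 sc1 taut1] [HG1 scG1 tautG1]] [[HF2 sc2 taut2] [HG2 scG2 tautG2]] ejoint.
apply: (flag_eq_of_closures HF1 HF2 sc1 sc2) => v u v0.
rewrite (closure_below_joint qZl qZr HF1 HG1 scG1 taut1 tautG1 u v0).
rewrite (closure_below_joint qZl qZr HF2 HG2 scG2 taut2 tautG2 u v0).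
by split=> ann w /ejoint /ann.
Qed.

Section RankOneActions.
Variables (K : fieldType) (V W : lmodType K) (p : V -> W -> K).

Lemma actV_rank1 v w : actV p [:: (v, w)] = fun u => p u w *: v.
Proof. by apply: functional_extensionality => u; rewrite /actV big_seq1. Qed.

Lemma actW_rank1 v w : actW p [:: (v, w)] = fun y => - (p v y *: w).
Proof. by apply: functional_extensionality => y; rewrite /actW big_seq1. Qed.

Lemma StV_rank1 F v w : gen_flag F -> StV p F [:: (v, w)] <-> rk1_stab p F v w.
Proof.
move=> HF; rewrite /StV /stab actV_rank1; split=> stab A FA.
- by apply/(scale_stable (fun u => p u w) v (flag_subspace HF FA)); apply: stab.
- exact/(scale_stable (fun u => p u w) v (flag_subspace HF FA))/stab.
Qed.

Lemma StW_rank1 G v w : gen_flag G -> StW p G [:: (v, w)] <-> rk1_stab (transp p) G w v.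
Proof.
move=> HG; rewrite /StW /stab actW_rank1; split=> stab B GB.
- apply/(scale_stable (p v) w (flag_subspace HG GB)) => y By.
  by apply/(subspaceN _ (flag_subspace HG GB)); apply: stab.
- move=> y By; apply/(subspaceN _ (flag_subspace HG GB)).
  exact: (scale_stable (p v) w (flag_subspace HG GB)).2 (stab B GB) y By.
Qed.

Lemma joint_rank1 F G v w : gen_flag F -> gen_flag G ->
  (StV p F [:: (v, w)] /\ StW p G [:: (v, w)]) <-> rk1_joint p F G v w.
Proof. by move=> HF HG; rewrite /rk1_joint (StV_rank1 _ _ HF) (StW_rank1 _ _ HG). Qed.

Lemma rk1_taut_of_StV F G : gen_flag F ->
  (forall s, StV p F s -> StV p (perp_famW p G) s) -> rk1_taut p F G.
Proof.
move=> HF tautFG v w stab B GB x perp_x.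
have memB : perp_famW p G (perpW p B) by exists B.
have := tautFG _ (proj2 (StV_rank1 _ _ HF) stab) _ memB x perp_x.
by rewrite actV_rank1.
Qed.

Hypothesis pZr : forall a u y, p u (a *: y) = a * p u y.

Lemma rk1_taut_of_StW F G : gen_flag G ->
  (forall s, StW p G s -> StW p (perp_famV p F) s) -> rk1_taut (transp p) G F.
Proof.
move=> HG tautGF w v stab A FA y perp_y x Ax.
have memA : perp_famV p F (perpV p A) by exists A.
have := tautGF _ (proj2 (StW_rank1 _ _ HG) stab) _ memA y perp_y x Ax.
rewrite actW_rank1 /transp -scaleNr !pZr mulNr => /eqP.
by rewrite oppr_eq0 => /eqP.
Qed.

Lemma rk1_of_taut_couple F G : taut_couple p F G -> rk1_taut_couple p F G.
Proof.
case=> HF [scF [HG [scG [tautGF tautFG]]]]; split; split=> //.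
- exact: rk1_taut_of_StV.
- exact: rk1_taut_of_StW.
Qed.

End RankOneActions.

Theorem proposition3p8 (K : numClosedFieldType) (V W : lmodType K) (p : V -> W -> K)
  (p_lin_l : forall (y : W) (a : K) (u v : V), p (a *: u + v) y = a * p u y + p v y)
  (p_lin_r : forall (u : V) (a : K) (y z : W), p u (a *: y + z) = a * p u y + p u z)
  (nd_l : forall u : V, (forall y : W, p u y = 0) -> u = 0)
  (nd_r : forall y : W, (forall u : V, p u y = 0) -> y = 0)
  (cV : countable_dim V) (cW : countable_dim W)
  (F1 F2 : (V -> Prop) -> Prop) (G1 G2 : (W -> Prop) -> Prop) :
  taut_couple p F1 G1 -> taut_couple p F2 G2 ->
  (forall s : seq (V * W), (StV p F1 s /\ StW p G1 s) <-> (StV p F2 s /\ StW p G2 s)) ->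
  F1 = F2 /\ G1 = G2.
Proof.
move=> taut1 taut2 same_stab.
have pZl a u y : p (a *: u) y = a * p u y.
  exact: (@functional_scale _ _ (fun u => p u y) (p_lin_l y)).
have pZr a u y : p u (a *: y) = a * p u y.
  exact: (@functional_scale _ _ (fun y => p u y) (p_lin_r u)).
have C1 := rk1_of_taut_couple pZr taut1; have C2 := rk1_of_taut_couple pZr taut2.
have [[HF1 _ _] [HG1 _ _]] := C1; have [[HF2 _ _] [HG2 _ _]] := C2.
have same_joint v w : rk1_joint p F1 G1 v w <-> rk1_joint p F2 G2 v w.
  by rewrite -(joint_rank1 p v w HF1 HG1) -(joint_rank1 p v w HF2 HG2).
split; first exact: (flag_determined pZl pZr C1 C2 same_joint).
apply: (flag_determined (fun a w x => pZr a x w) (fun a w x => pZl a x w)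
          (rk1_taut_couple_transp C1) (rk1_taut_couple_transp C2)) => w v.
rewrite (@rk1_joint_transp _ _ _ p F1 G1 v w) (@rk1_joint_transp _ _ _ p F2 G2 v w).
exact: same_joint.
Qed.
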